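(* Let $R_1,R_2>0$, $E_2\in\mathbb{R}$, and consider the two-source resistive circuit described in the context with $E_1=0$. Let $\mathrm{Loss}'=E_2^2/(R_1+R_2)$ be the total heat loss without the cross link, and for $R_3>0$ let $\mathrm{Loss}(R_3)=i_1^2R_1+i_2^2R_2+i_3^2R_3$ be the total heat loss with the cross link of resistance $R_3$ connected. Then $$\lim_{R_3\to0^+}\mathrm{Loss}(R_3)=\Big(\frac{R_1}{R_2}+1\Big)\mathrm{Loss}',$$ i.e. (when $E_2\neq 0$) the Loss Cost of the Link $\mathrm{LCL}=\mathrm{Loss}(R_3)/\mathrm{Loss}'$ tends to $R_1/R_2+1\ge 1$ as $R_3\to0^+$.
   Context: The circuit consists of two DC voltage sources $E_1,E_2$ and resistors $R_1,R_2>0$, arranged in a single loop so that, when the cross link is absent, the same current flows through $R_1$ and $R_2$: $i_1=i_2=(E_1+E_2)/(R_1+R_2)$, $i_3=0$. A cross link containing a resistor $R_3>0$ can be connected between the two branches; when it is connected, the currents through $R_1,R_2,R_3$ are $$i_1=\frac{E_1(R_2+R_3)+E_2R_3}{R_1R_2+R_1R_3+R_2R_3},\quad i_2=\frac{E_1R_3+E_2(R_1+R_3)}{R_1R_2+R_1R_3+R_2R_3},\quad i_3=\frac{-E_1R_2+E_2R_1}{R_1R_2+R_1R_3+R_2R_3}.$$ The Loss Cost of the Link (LCL) is the ratio $\mathrm{Loss}/\mathrm{Loss}'$ of the total network heat loss after adding the link ($\mathrm{Loss}$) to that before adding it ($\mathrm{Loss}'$). *)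

From Stdlib Require Import Reals.
From Coquelicot Require Import Coquelicot.
Open Scope R_scope.

(* Currents with the cross link of resistance R3 connected (paper's formulas). *)
Definition den (R1 R2 R3 : R) : R := R1 * R2 + R1 * R3 + R2 * R3.
Definition i1 (E1 E2 R1 R2 R3 : R) : R :=
  (E1 * (R2 + R3) + E2 * R3) / den R1 R2 R3.
Definition i2 (E1 E2 R1 R2 R3 : R) : R :=
  (E1 * R3 + E2 * (R1 + R3)) / den R1 R2 R3.
Definition i3 (E1 E2 R1 R2 R3 : R) : R :=
  (- E1 * R2 + E2 * R1) / den R1 R2 R3.

Definition Loss (E1 E2 R1 R2 R3 : R) : R :=
  (i1 E1 E2 R1 R2 R3)^2 * R1 + (i2 E1 E2 R1 R2 R3)^2 * R2
  + (i3 E1 E2 R1 R2 R3)^2 * R3.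

(* Total heat loss without the link: i1 = i2 = (E1+E2)/(R1+R2). *)
Definition Loss' (E1 E2 R1 R2 : R) : R :=
  ((E1 + E2) / (R1 + R2))^2 * R1 + ((E1 + E2) / (R1 + R2))^2 * R2.

From Stdlib Require Import Reals Lra.
From Coquelicot Require Import Coquelicot.
Open Scope R_scope.

(* The loss is a rational function of R3 whose denominator does not vanish at
   R3 = 0, so its one-sided limit there is its value at a short-circuited link,
   namely E1^2/R1 + E2^2/R2; for E1 = 0 this is E2^2/R2 = (R1/R2 + 1) Loss'. *)

Lemma den_at_0 (R1 R2 : R) : den R1 R2 0 = R1 * R2.
Proof. unfold den; ring. Qed.

Lemma Loss_continuous_pt (E1 E2 R1 R2 R3 : R) :
  den R1 R2 R3 <> 0 -> continuity_pt (Loss E1 E2 R1 R2) R3.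
Proof.
  intros Hden.
  unfold Loss, i1, i2, i3.
  apply derivable_continuous_pt.
  unfold den in Hden |- *.
  reg.
  all: exact Hden.
Qed.

Lemma Loss_short_link (E1 E2 R1 R2 : R) : 0 < R1 -> 0 < R2 ->
  Loss E1 E2 R1 R2 0 = E1 ^ 2 / R1 + E2 ^ 2 / R2.
Proof.
  intros HR1 HR2.
  unfold Loss, i1, i2, i3; rewrite den_at_0.
  field; lra.
Qed.

Lemma Loss'_eq (E1 E2 R1 R2 : R) : 0 < R1 + R2 ->
  Loss' E1 E2 R1 R2 = (E1 + E2) ^ 2 / (R1 + R2).
Proof. intros HR; unfold Loss'; field; lra. Qed.

Lemma filterlim_at_right_continuity_pt (f : R -> R) (x : R) :
  continuity_pt f x -> filterlim f (at_right x) (locally (f x)).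
Proof.
  intros Hf.
  apply (filterlim_filter_le_1 (F := locally x)).
  - intros P HP; exact (filter_le_within _ _ HP).
  - exact (proj1 (continuity_pt_filterlim f x) Hf).
Qed.

Theorem corollary1 (R1 R2 E2 : R) (hR1 : 0 < R1) (hR2 : 0 < R2) :
  filterlim (fun R3 => Loss 0 E2 R1 R2 R3) (at_right 0)
    (locally ((R1 / R2 + 1) * Loss' 0 E2 R1 R2)).
Proof.
  assert (Hlimit : (R1 / R2 + 1) * Loss' 0 E2 R1 R2 = Loss 0 E2 R1 R2 0).
  { rewrite Loss'_eq, Loss_short_link by lra.
    field; lra. }
  rewrite Hlimit.
  apply filterlim_at_right_continuity_pt, Loss_continuous_pt.
  rewrite den_at_0.
  apply Rgt_not_eq, Rmult_lt_0_compat; assumption.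
Qed.
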